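(* Let $d\ge 2$ and let $|\psi^1\rangle,|\psi^2\rangle\in\mathbb{C}^d$ be arbitrary one-qudit states. Consider eight qudits labelled $1,\dots,8$ in the state $$|\Psi\rangle=|\psi^1\rangle_1|\psi^2\rangle_5|H\rangle_{26}|H\rangle_{34}|H\rangle_{78},$$ where $|H\rangle=\sum_{j,k\in\mathbb{Z}_d}\omega^{jk}|j\rangle|k\rangle$. For $r,s,t\in\mathbb{Z}_d$ let $|b_{rst}\rangle=(X^r\otimes Z^s\otimes X^t)\sum_{m\in\mathbb{Z}_d}|m\rangle|m\rangle|m\rangle$ (these $d^3$ vectors form an orthogonal basis $B_2$ of three qudits). Suppose qudits $1,2,3$ (in this order) are measured in $B_2$ with outcome $r,s,t$ and qudits $5,6,7$ (in this order) are measured in $B_2$ with outcome $u,v,w$. Then the resulting (unnormalised) state of qudits $4,8$, namely $(\langle b_{rst}|_{123}\otimes\langle b_{uvw}|_{567})|\Psi\rangle$, equals, up to a nonzero scalar factor independent of $\psi^1,\psi^2$, $$Z_4^{t-r}Z_8^{w-u}X_4^{s+u}X_8^{v+r}F_4F_8C_{Z(4,8)}|\psi^1\rangle_4|\psi^2\rangle_8.$$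
   Context: $\omega=e^{2\pi i/d}$; $X|j\rangle=|j+1\bmod d\rangle$, $Z|j\rangle=\omega^j|j\rangle$, $F|j\rangle=\frac1{\sqrt d}\sum_{m\in\mathbb{Z}_d}\omega^{jm}|m\rangle$. $C_{Z(4,8)}$ is the controlled-$Z$ gate $|j\rangle_4|k\rangle_8\mapsto\omega^{jk}|j\rangle_4|k\rangle_8$. Subscripts indicate the qudit on which an operator acts. *)

From mathcomp Require Import all_boot all_order all_algebra.
From mathcomp Require Import reals realfun trigo.
From mathcomp Require Export complex.
Set Implicit Arguments. Unset Strict Implicit. Unset Printing Implicit Defensive.
Import Order.TTheory GRing.Theory Num.Theory.
Local Open Scope ring_scope.

Section Qudits.
Variables (R : realType) (d : nat).
Local Notation C := R[i].

Definition omega : C := Complex (cos (2 * pi / d%:R)) (sin (2 * pi / d%:R)).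

(* computational basis labels: Z_d (the statements assume 2 <= d) *)
Local Notation Zd := 'Z_d.

(* one-qudit states (amplitude functions) and one-qudit operators (matrix entries A j k = <j|A|k>) *)
Definition ket1 := Zd -> C.
Definition op1 := Zd -> Zd -> C.

Definition Xop : op1 := fun j k => ((j == k + 1)%:R : C).
Definition Zop : op1 := fun j k => ((j == k)%:R : C) * omega ^+ (val j).
Definition Fop : op1 := fun m j =>
  (Complex (Num.sqrt (d%:R : R)) 0)^-1 * omega ^+ (val j * val m)%N.

Definition opmul (A B : op1) : op1 := fun j k => \sum_(l : Zd) A j l * B l k.
Definition opid : op1 := fun j k => ((j == k)%:R : C).
Definition oppow (A : op1) (n : nat) : op1 := iter n (opmul A) opid.

Definition cfg (n : nat) := {ffun 'I_n -> Zd}.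
Definition state (n : nat) := cfg n -> C.

Definition upd n (x : cfg n) (i : 'I_n) (j : Zd) : cfg n :=
  [ffun k => if k == i then j else x k].

Definition act1 n (A : op1) (i : 'I_n) (psi : state n) : state n :=
  fun x => \sum_(j : Zd) A (x i) j * psi (upd x i j).

Definition CZ n (i j : 'I_n) (psi : state n) : state n :=
  fun x => omega ^+ (val (x i) * val (x j))%N * psi x.

Definition Hamp (j k : Zd) : C := omega ^+ (val j * val k)%N.

Definition ghz3 : state 3 :=
  fun x => ((x ord0 == x (inord 1)) && (x (inord 1) == x (inord 2)))%:R.

Definition bvec (r s t : Zd) : state 3 :=
  act1 (oppow Xop (val r)) ord0
    (act1 (oppow Zop (val s)) (inord 1)
      (act1 (oppow Xop (val t)) (inord 2) ghz3)).

Definition cfg3 (a b c : Zd) : cfg 3 :=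
  [ffun k : 'I_3 => if val k == 0%N then a else if val k == 1%N then b else c].

Definition cfg2 (a b : Zd) : cfg 2 :=
  [ffun k : 'I_2 => if val k == 0%N then a else b].

(* Qudits labelled 1..8 in the paper are indices 0..7 here. *)
Definition q (k : nat) : 'I_8 := inord k.-1.

Definition Psi (psi1 psi2 : ket1) : state 8 :=
  fun x => psi1 (x (q 1)) * psi2 (x (q 5)) * Hamp (x (q 2)) (x (q 6))
           * Hamp (x (q 3)) (x (q 4)) * Hamp (x (q 7)) (x (q 8)).

(* (<b_rst|_{123} (x) <b_uvw|_{567}) |Psi>, a state of qudits 4,8
   (index 0 of the result = qudit 4, index 1 = qudit 8) *)
Definition measured (r s t u v w : Zd) (Phi : state 8) : state 2 :=
  fun y => \sum_(x : cfg 8 | (x (q 4) == y ord0) && (x (q 8) == y (inord 1)))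
     (bvec r s t (cfg3 (x (q 1)) (x (q 2)) (x (q 3))))^*
     * (bvec u v w (cfg3 (x (q 5)) (x (q 6)) (x (q 7))))^* * Phi x.

(* |psi1>_4 |psi2>_8 as a 2-qudit state (index 0 = qudit 4, index 1 = qudit 8) *)
Definition prod2 (psi1 psi2 : ket1) : state 2 :=
  fun y => psi1 (y ord0) * psi2 (y (inord 1)).

Definition target (r s t u v w : Zd) (psi1 psi2 : ket1) : state 2 :=
  let i4 : 'I_2 := ord0 in let i8 : 'I_2 := inord 1 in
  act1 (oppow Zop (val (t - r))) i4
   (act1 (oppow Zop (val (w - u))) i8
    (act1 (oppow Xop (val (s + u))) i4
     (act1 (oppow Xop (val (v + r))) i8
      (act1 Fop i4
       (act1 Fop i8
        (CZ i4 i8 (prod2 psi1 psi2))))))).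

End Qudits.

From mathcomp Require Import all_boot all_order all_algebra.
From mathcomp Require Import reals complex.
From mathcomp Require Import trigo ring.
From Stdlib Require Import FunctionalExtensionality.
Import Order.TTheory GRing.Theory Num.Theory.
Local Open Scope ring_scope.

(* Measuring qudits 1,2,3 in B_2 with outcome (r,s,t) forces x2 = x1 - r and
   x3 = x2 + t on the surviving configurations, and likewise for qudits 5,6,7;
   so the measured amplitude at (y4, y8) collapses to a double sum over a = x1,
   b = x5 of psi1(a) psi2(b) omega^phi(a,b), with phi a quadratic form over Z_d.
   Unfolding Z, X, F and C_Z writes the target state as the same kind of double
   sum, with a phase differing from phi by the constant sr + vu + ru, times the
   factor 1/d of the two Fourier transforms.  Hence c = d omega^(sr+vu+ru). *)

Lemma sum_on_section (V : nmodType) (I J : finType) (P : pred I) (p : I -> J)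
    (g : J -> I) (F : I -> V) :
  (forall j, P (g j) && (p (g j) == j)) ->
  (forall x, P x -> x != g (p x) -> F x = 0) ->
  \sum_(x | P x) F x = \sum_j F (g j).
Proof.
move=> Pg F0; rewrite (partition_big p predT) //=; apply: eq_bigr => j _.
rewrite (bigD1 (g j)) ?Pg //= big1 ?addr0 // => x /andP[/andP[Px /eqP pxj] xNg].
by apply: F0; rewrite ?pxj.
Qed.

Section RootOfUnity.
Variables (R : realType) (d : nat).
Local Notation w := (omega R d).

Lemma omega_expE k :
  w ^+ k = Complex (cos (k%:R * (2 * pi / d%:R))) (sin (k%:R * (2 * pi / d%:R))).
Proof.
elim: k => [|k IHk]; first by rewrite expr0 !mul0r cos0 sin0.
rewrite exprS IHk; set th := 2 * pi / d%:R.
have -> : k.+1%:R * th = th + k%:R * th by rewrite -addn1 natrD mulrDl mul1r addrC.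
rewrite cosD sinD.
by congr Complex; ring.
Qed.

Lemma omega_exp_order : w ^+ d = 1.
Proof.
have [->|d_gt0] := posnP d; first exact: expr0.
rewrite omega_expE mulrCA mulrV ?mulr1; last by rewrite unitfE pnatr_eq0 -lt0n.
by rewrite mulr_natl cos2pi sin2pi.
Qed.

Lemma omega_exp_modn m : w ^+ (m %% d) = w ^+ m.
Proof. by rewrite {2}(divn_eq m d) exprD mulnC exprM omega_exp_order expr1n mul1r. Qed.

Lemma conj_omega_mul : w^* * w = 1.
Proof.
rewrite /omega /=; congr Complex; last by rewrite mulNr mulrC subrr.
by rewrite mulNr opprK -!expr2 addrC sin2cos2 subrK.
Qed.

End RootOfUnity.

Lemma val_q k : (0 < k <= 8)%N -> val (q k) = k.-1.
Proof. by case/andP => k_gt0 k_le8; rewrite /q /= inordK // prednK. Qed.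

Section Qudit.
Variables (R : realType) (n : nat).
(* ['Z_d] is the ring of integers mod d only when d >= 2. *)
Local Notation d := n.+2.
Local Notation C := R[i].
Local Notation w := (omega R d).
Local Notation Zd := 'Z_d.

Definition chi (a : Zd) : C := w ^+ val a.

Lemma omega_exp_valM (a b : Zd) : w ^+ (val a * val b) = chi (a * b).
Proof. by rewrite /chi /= omega_exp_modn. Qed.

Lemma chi0 : chi 0 = 1.
Proof. exact: expr0. Qed.

Lemma chiD (a b : Zd) : chi (a + b) = chi a * chi b.
Proof. by rewrite /chi /= omega_exp_modn exprD. Qed.

Lemma chi_neq0 a : chi a != 0.
Proof.
apply/eqP => chi_a0; have /eqP := chiD a (- a).
by rewrite chi_a0 mul0r addrN chi0 oner_eq0.
Qed.

Lemma conj_chi a : (chi a)^* = chi (- a).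
Proof.
apply: (mulIf (chi_neq0 a)); rewrite -chiD addNr chi0 /chi rmorphXn /=.
by rewrite -exprMn conj_omega_mul expr1n.
Qed.

Lemma oppow_XopE m (j k : Zd) : oppow (@Xop R d) m j k = (j == k + m%:R)%:R.
Proof.
elim: m j k => [|m IHm] j k; first by rewrite /oppow /= addr0.
rewrite /oppow iterS -/(oppow _ m) /opmul (bigD1 (j - 1)) //= big1 ?addr0.
  by rewrite IHm /Xop subrK eqxx mul1r -[m.+1]addn1 natrD addrA subr_eq.
move=> l /negbTE l_neq; rewrite /Xop; case: eqP => [j_eq|]; last by rewrite mul0r.
by move: l_neq; rewrite j_eq addrK eqxx.
Qed.

Lemma oppow_ZopE m (j k : Zd) : oppow (@Zop R d) m j k = (j == k)%:R * w ^+ (m * val j).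
Proof.
elim: m j k => [|m IHm] j k; first by rewrite /oppow /= mulr1.
rewrite /oppow iterS -/(oppow _ m) /opmul (bigD1 j) //= big1 ?addr0.
  by rewrite IHm /Zop eqxx mul1r mulrCA -exprD mulSn.
by move=> l /negbTE l_neq; rewrite /Zop eq_sym l_neq !mul0r.
Qed.

Lemma upd_id N (x : cfg d N) i : upd x i (x i) = x.
Proof. by apply/ffunP => k; rewrite ffunE; case: eqP => // ->. Qed.

Lemma act1_XpowE N (a : Zd) (i : 'I_N) psi x :
  act1 (oppow (@Xop R d) (val a)) i psi x = psi (upd x i (x i - a)).
Proof.
rewrite /act1 (bigD1 (x i - a)) //= big1 ?addr0.
  by rewrite oppow_XopE natr_Zp subrK eqxx mul1r.
by move=> j /negbTE j_neq; rewrite oppow_XopE natr_Zp -subr_eq eq_sym j_neq mul0r.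
Qed.

Lemma act1_ZpowE N (a : Zd) (i : 'I_N) psi x :
  act1 (oppow (@Zop R d) (val a)) i psi x = chi (a * x i) * psi x.
Proof.
rewrite /act1 (bigD1 (x i)) //= big1 ?addr0.
  by rewrite oppow_ZopE eqxx mul1r upd_id omega_exp_valM.
by move=> j /negbTE j_neq; rewrite oppow_ZopE eq_sym j_neq !mul0r.
Qed.

Definition fourier_scale : C := (Complex (Num.sqrt (d%:R : R)) 0)^-1.

Lemma fourier_scale_neq0 : fourier_scale != 0.
Proof. by rewrite invr_eq0; apply/eqP => -[] /eqP; rewrite sqrtr_eq0 leNgt ltr0Sn. Qed.

Lemma act1_FopE N (i : 'I_N) psi x :
  act1 (@Fop R d) i psi x = fourier_scale * \sum_(j : Zd) chi (j * x i) * psi (upd x i j).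
Proof. by rewrite mulr_sumr; apply: eq_bigr => j _; rewrite /Fop omega_exp_valM mulrA. Qed.

Lemma cfg3E (a b c : Zd) (k : 'I_3) :
  cfg3 a b c k = if val k == 0%N then a else if val k == 1%N then b else c.
Proof. exact: ffunE. Qed.

Lemma upd_cfg3_0 (a b c j : Zd) : upd (cfg3 a b c) ord0 j = cfg3 j b c.
Proof. by apply/ffunP => -[[|[|[|k]]] lt_k3]; rewrite !ffunE. Qed.

Lemma upd_cfg3_2 (a b c j : Zd) : upd (cfg3 a b c) (inord 2) j = cfg3 a b j.
Proof. by apply/ffunP => -[[|[|[|k]]] lt_k3]; rewrite !ffunE // -val_eqE /= inordK. Qed.

Lemma bvecE (r s t a b c : Zd) :
  bvec R r s t (cfg3 a b c) = ((a - r == b) && (b == c - t))%:R * chi (s * b).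
Proof.
rewrite /bvec act1_XpowE upd_cfg3_0 act1_ZpowE act1_XpowE upd_cfg3_2 /ghz3 !cfg3E.
by rewrite /= !inordK // mulrC.
Qed.

Lemma conj_bvecE (r s t a b c : Zd) :
  (bvec R r s t (cfg3 a b c))^* = ((a - r == b) && (b == c - t))%:R * chi (- (s * b)).
Proof. by rewrite bvecE rmorphM /= conj_chi rmorph_nat. Qed.

Lemma cfg2E (a b : Zd) (k : 'I_2) : cfg2 a b k = if val k == 0%N then a else b.
Proof. exact: ffunE. Qed.

Lemma upd_cfg2_0 (y : cfg d 2) (j : Zd) : upd y ord0 j = cfg2 j (y (inord 1)).
Proof.
apply/ffunP => -[[|[|k]] lt_k2]; rewrite !ffunE //=.
by congr (y _); apply: val_inj; rewrite /= inordK.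
Qed.

Lemma upd_cfg2_1 (y : cfg d 2) (j : Zd) : upd y (inord 1) j = cfg2 (y ord0) j.
Proof.
apply/ffunP => -[[|[|k]] lt_k2]; rewrite !ffunE -val_eqE /= inordK //=.
by congr (y _); apply: val_inj.
Qed.

Definition phase_sum (psi1 psi2 : ket1 R d) (f : Zd -> Zd -> Zd) : C :=
  \sum_a \sum_b psi1 a * psi2 b * chi (f a b).

Lemma eq_phase_sum psi1 psi2 f g : f =2 g -> phase_sum psi1 psi2 f = phase_sum psi1 psi2 g.
Proof. by move=> fg; apply: eq_bigr => a _; apply: eq_bigr => b _; rewrite fg. Qed.

Lemma phase_sumD psi1 psi2 c f :
  phase_sum psi1 psi2 (fun a b => c + f a b) = chi c * phase_sum psi1 psi2 f.
Proof.
rewrite mulr_sumr; apply: eq_bigr => a _; rewrite mulr_sumr; apply: eq_bigr => b _.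
by rewrite chiD mulrCA.
Qed.

Lemma fourier2_CZE (psi1 psi2 : ket1 R d) (y : cfg d 2) :
  act1 (@Fop R d) ord0 (act1 (@Fop R d) (inord 1) (CZ ord0 (inord 1) (prod2 psi1 psi2))) y =
  fourier_scale ^+ 2 * phase_sum psi1 psi2 (fun a b => a * b + a * y ord0 + b * y (inord 1)).
Proof.
rewrite act1_FopE expr2 -mulrA; congr (_ * _); rewrite mulr_sumr; apply: eq_bigr => a _.
rewrite act1_FopE upd_cfg2_0 cfg2E /= mulrCA; congr (_ * _); rewrite !mulr_sumr; apply: eq_bigr => b _.
rewrite upd_cfg2_1 /CZ /prod2 !cfg2E /= inordK //= omega_exp_valM !chiD.
by ring.
Qed.

Lemma targetE (r s t u v w : Zd) (psi1 psi2 : ket1 R d) (y : cfg d 2) :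
  target r s t u v w psi1 psi2 y = fourier_scale ^+ 2 * phase_sum psi1 psi2 (fun a b =>
    (t - r) * y ord0 + ((w - u) * y (inord 1)
     + (a * b + a * (y ord0 - (s + u)) + b * (y (inord 1) - (v + r))))).
Proof.
rewrite /target !act1_ZpowE !act1_XpowE upd_cfg2_0 upd_cfg2_1 !cfg2E /= inordK //=.
rewrite fourier2_CZE !cfg2E /= inordK //=.
by rewrite !phase_sumD; ring.
Qed.

Section Measurement.
Variables (r s t u v w : Zd) (y : cfg d 2).
Local Notation y0 := (y ord0).
Local Notation y1 := (y (inord 1)).

Definition meas_cfg (a b : Zd) : cfg d 8 :=
  [ffun i : 'I_8 => nth a [:: a; a - r; a - r + t; y0; b; b - u; b - u + w; y1] i].

Lemma meas_cfgE a b k : (0 < k <= 8)%N ->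
  meas_cfg a b (q k) = nth a [:: a; a - r; a - r + t; y0; b; b - u; b - u + w; y1] k.-1.
Proof. by move=> k_range; rewrite ffunE val_q. Qed.

Lemma meas_cfg_uniq {x : cfg d 8} :
  x (q 4) = y0 -> x (q 8) = y1 ->
  (x (q 1) - r == x (q 2)) && (x (q 2) == x (q 3) - t) ->
  (x (q 5) - u == x (q 6)) && (x (q 6) == x (q 7) - w) ->
  x = meas_cfg (x (q 1)) (x (q 5)).
Proof.
move=> x4 x8 /andP[/eqP x2 /eqP x3] /andP[/eqP x6 /eqP x7].
have qE k (lt_k8 : (k < 8)%N) : Ordinal lt_k8 = q k.+1 by apply: val_inj; rewrite /= inordK.
apply/ffunP => -[[|[|[|[|[|[|[|[|k]]]]]]]] lt_k8] //; rewrite ffunE qE val_q //=.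
- by rewrite x2 x3 subrK.
- by rewrite x6 x7 subrK.
Qed.

Lemma measured_PsiE psi1 psi2 :
  measured r s t u v w (Psi psi1 psi2) y = phase_sum psi1 psi2 (fun a b =>
    - (s * (a - r)) - v * (b - u) + (a - r) * (b - u) + (a - r + t) * y0 + (b - u + w) * y1).
Proof.
rewrite /measured (@sum_on_section _ _ _ _ (fun x : cfg d 8 => (x (q 1), x (q 5)))
  (fun ab => meas_cfg ab.1 ab.2)).
- rewrite /phase_sum pair_big; apply: eq_bigr => -[a b] _ /=.
  rewrite /Psi /Hamp !omega_exp_valM !meas_cfgE //= !conj_bvecE !addrK !eqxx /=.
  by rewrite !chiD; ring.
- by move=> [a b]; rewrite !meas_cfgE //= !eqxx.
move=> x /andP[/eqP x4 /eqP x8] x_neq; rewrite !conj_bvecE.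
have [x123|] := boolP (_ && _); last by rewrite !mul0r.
have [x567|] := boolP (_ && _); last by rewrite mul0r mulr0 mul0r.
by rewrite -(meas_cfg_uniq x4 x8 x123 x567) eqxx in x_neq.
Qed.

End Measurement.
End Qudit.

Theorem lemma1 (R : realType) (d : nat) (hd : (2 <= d)%N) (r s t u v w : 'Z_d) :
  exists c : R[i], c != 0 /\
    forall psi1 psi2 : 'Z_d -> R[i],
      measured r s t u v w (Psi psi1 psi2) = (fun y => c * target r s t u v w psi1 psi2 y).
Proof.
case: d hd r s t u v w => [|[|n]] // _ r s t u v w.
exists (chi R n (s * r + v * u + r * u) / fourier_scale R n ^+ 2); split.
  by rewrite mulf_neq0 ?chi_neq0 // invr_eq0 expf_neq0 ?fourier_scale_neq0.
move=> psi1 psi2; apply: functional_extensionality => y.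
rewrite measured_PsiE targetE mulrA divfK ?expf_neq0 ?fourier_scale_neq0 // -phase_sumD.
by apply: eq_phase_sum => a b; ring.
Qed.
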